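(* Let $d\ge3$, $n\ge1$, $0\le c<\frac{1}{d(d-1)}$, and let $$\rho(c,0)=\Big(\frac1{2d}-\frac{d-1}2c\Big)\sum_{i=0}^{d-1}|ii\rangle\langle ii|+\frac1{d(d-1)}\sum_{i<j}|\psi^-_{ij}\rangle\langle\psi^-_{ij}|+c\sum_{i<j}|\psi^+_{ij}\rangle\langle\psi^+_{ij}|.$$ Then the null space of $(\rho(c,0)^{PT})^{\otimes n}$ contains no nonzero vector of Schmidt rank less than three.
   Context: $|\psi^{\pm}_{ij}\rangle=\frac1{\sqrt2}(|ij\rangle\pm|ji\rangle)$, sums over $0\le i<j\le d-1$. $\rho^{PT}$ is the partial transpose on the second factor of $\mathbb{C}^d\otimes\mathbb{C}^d$. The operator acts on $(\mathbb{C}^d\otimes\mathbb{C}^d)^{\otimes n}$, regarded as a bipartite space $(\mathbb{C}^d)^{\otimes n}_A\otimes(\mathbb{C}^d)^{\otimes n}_B$ with the first factor of each copy belonging to $A$; Schmidt rank is with respect to this bipartition. *)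

From HB Require Import structures.
From mathcomp Require Import all_boot all_order all_algebra.
From mathcomp Require Import reals.
From mathcomp.real_closed Require Import complex.
Set Implicit Arguments. Unset Strict Implicit. Unset Printing Implicit Defensive.
Import Order.TTheory GRing.Theory Num.Theory.
Local Open Scope ring_scope.

Section Defs.
Variables (R : realType) (d : nat).
Local Notation C := (R[i]).

(* basis index of C^d (x) C^d : pairs (i,j) standing for |ij> *)
Definition idx := ('I_d * 'I_d)%type.

Definition ket (i j : 'I_d) : idx -> C := fun x => (x == (i, j))%:R.

(* |psi^{+/-}_{ij}> = (|ij> +/- |ji>)/sqrt 2 ; s = 1 or s = -1 *)
Definition psi (s : C) (i j : 'I_d) : idx -> C :=
  fun x => (sqrtC 2)^-1 * (ket i j x + s * ket j i x).

Definition proj (v : idx -> C) : idx -> idx -> C := fun x y => v x * (v y)^*.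

Definition rho (c : R) : idx -> idx -> C := fun x y =>
  ((1 / (2 * d%:R) - (d%:R - 1) / 2 * c)%:C)%C * \sum_(i : 'I_d) proj (ket i i) x y
  + (1 / (d%:R * (d%:R - 1))) * \sum_(i : 'I_d) \sum_(j : 'I_d | (i < j)%N) proj (psi (-1) i j) x y
  + (c%:C)%C * \sum_(i : 'I_d) \sum_(j : 'I_d | (i < j)%N) proj (psi 1 i j) x y.

(* partial transpose on the second factor:
   <ij| rho^PT |kl> = <il| rho |kj> *)
Definition pt (M : idx -> idx -> C) : idx -> idx -> C :=
  fun x y => M (x.1, y.2) (y.1, x.2).

(* (M)^{(x) n} on (C^d (x) C^d)^{(x) n}; basis indexed by the n copies *)
Definition tpow (n : nat) (M : idx -> idx -> C) :
  {ffun 'I_n -> idx} -> {ffun 'I_n -> idx} -> C :=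
  fun X Y => \prod_(k < n) M (X k) (Y k).

Definition in_null (n : nat) (M : {ffun 'I_n -> idx} -> {ffun 'I_n -> idx} -> C)
  (v : {ffun 'I_n -> idx} -> C) : Prop :=
  forall X, \sum_Y M X Y * v Y = 0.

(* Schmidt rank of v w.r.t. A = first factors of all copies, B = second factors:
   rank of the coefficient matrix  (a, b) |-> v(k |-> (a k, b k)). *)
Definition coefmx (n : nat) (v : {ffun 'I_n -> idx} -> C) :
  'M[C]_(#|{ffun 'I_n -> 'I_d}|, #|{ffun 'I_n -> 'I_d}|) :=
  \matrix_(p, q) v [ffun k => ((enum_val p : {ffun 'I_n -> 'I_d}) k,
                               (enum_val q : {ffun 'I_n -> 'I_d}) k)].

Definition schmidt_rank (n : nat) (v : {ffun 'I_n -> idx} -> C) : nat :=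
  \rank (coefmx v).

End Defs.

(* The partial transpose of rho(c,0) acts as the scalar (beta + c)/2 on every |ab> with
   a <> b, and as gamma I + (c - beta)/2 J on span {|kk>} (J the all-ones matrix), where
   beta = 1/(d(d-1)) and gamma = d(beta - c)/2; both scalars are nonzero for
   0 <= c < beta, so its kernel lies on the line spanned by sum_k |kk>.  Let v be in the kernel of the n-th tensor power.
   Contracting the last n-1 copies puts, for every fixed index of those copies, the
   first-copy component of v on that line.  Hence every off-diagonal slice v(ab, -) lies in
   the kernel of the (n-1)-th power, and so does every diagonal slice v(bb, -) as soon as
   one diagonal slice vanishes.  One must vanish if the Schmidt rank is < 3: nonzero
   entries of three diagonal slices (d >= 3) would give a nonsingular diagonal 3x3 minor
   of the coefficient matrix.  Since this "no diagonal 3x3 minor" property passes to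
   slices, induction on n shows v = 0. *)

From HB Require Import structures.
From mathcomp Require Import all_boot all_order all_algebra.
From mathcomp Require Import reals.
From mathcomp.real_closed Require Import complex.
From mathcomp Require Import ring lra.
Set Implicit Arguments. Unset Strict Implicit. Unset Printing Implicit Defensive.
Import Order.TTheory GRing.Theory Num.Theory.
Local Open Scope ring_scope.

Section FfunCons.
Variables (T : Type) (n : nat).

Definition fcons (x : T) (f : {ffun 'I_n -> T}) : {ffun 'I_n.+1 -> T} :=
  [ffun k => if unlift ord0 k is Some k' then f k' else x].

Definition ftail (X : {ffun 'I_n.+1 -> T}) : {ffun 'I_n -> T} :=
  [ffun k => X (lift ord0 k)].

Lemma fcons0 x f : fcons x f ord0 = x.
Proof. by rewrite ffunE unlift_none. Qed.

Lemma fconsS x f k : fcons x f (lift ord0 k) = f k.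
Proof. by rewrite ffunE liftK. Qed.

Lemma ftail_fcons x f : ftail (fcons x f) = f.
Proof. by apply/ffunP => k; rewrite ffunE fconsS. Qed.

Lemma fcons_ftail (X : {ffun 'I_n.+1 -> T}) : fcons (X ord0) (ftail X) = X.
Proof.
apply/ffunP => k; case: (unliftP ord0 k) => [j ->|->]; last by rewrite fcons0.
by rewrite fconsS ffunE.
Qed.

End FfunCons.

Lemma big_fcons (T : finType) (V : nmodType) n (F : {ffun 'I_n.+1 -> T} -> V) :
  \sum_X F X = \sum_x \sum_(X : {ffun 'I_n -> T}) F (fcons x X).
Proof.
rewrite pair_big /= (reindex (fun p : T * _ => fcons p.1 p.2)) //=.
exists (fun X : {ffun _ -> T} => (X ord0, ftail X)) => [[x f] _ | X _] /=.
  by rewrite fcons0 ftail_fcons.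
by rewrite fcons_ftail.
Qed.

Lemma mxrank_mxsub (F : fieldType) m n m' n' (f : 'I_m' -> 'I_m) (g : 'I_n' -> 'I_n)
    (A : 'M[F]_(m, n)) :
  (\rank (mxsub f g A) <= \rank A)%N.
Proof.
rewrite mxsubrc (leq_trans (mxrankS (rowsub_sub _ _))) //.
by rewrite -mxrank_tr -[leqRHS]mxrank_tr trmx_mxsub mxrankS ?rowsub_sub.
Qed.

Lemma sumr_sym_triangle (V : nmodType) n (F : 'I_n -> 'I_n -> V) :
    (forall i j, F i j = F j i) ->
  \sum_i \sum_j F i j
  = \sum_i F i i + (\sum_(i : 'I_n) \sum_(j : 'I_n | (i < j)%N) F i j) *+ 2.
Proof.
move=> FC.
have split_row i : \sum_j F i j =
    F i i + \sum_(j : 'I_n | (i < j)%N) F i j + \sum_(j : 'I_n | (j < i)%N) F i j.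
  rewrite (bigD1 i) //= [X in _ + X](bigID (fun j : 'I_n => (i < j)%N)) /= addrA.
  congr (_ + _ + _); apply: eq_bigl => j.
    by rewrite andb_idl // => ij; rewrite neq_ltn ij orbT.
  by rewrite neq_ltn; case: ltngtP.
have lower : \sum_(i : 'I_n) \sum_(j : 'I_n | (j < i)%N) F i j
             = \sum_(i : 'I_n) \sum_(j : 'I_n | (i < j)%N) F i j.
  under eq_bigr do rewrite big_mkcond /=.
  rewrite exchange_big /=; apply: eq_bigr => i _.
  by rewrite [RHS]big_mkcond; apply: eq_bigr => j _; rewrite FC.
under eq_bigr do rewrite split_row.
by rewrite !big_split /= lower -addrA.
Qed.

Section Coefficients.
Variables (R : realType) (d : nat).
Local Notation C := R[i].
Local Notation vec n := ({ffun 'I_n -> idx d} -> C).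

Definition coef n (v : vec n) (p q : {ffun 'I_n -> 'I_d}) : C := v [ffun k => (p k, q k)].

Definition slice n (v : vec n.+1) (x : idx d) : vec n := fun Y => v (fcons x Y).

(* The only consequence of Schmidt rank < 3 that the induction uses; unlike the rank, it
   visibly passes to slices. *)
Definition no_diag_minor3 n (v : vec n) :=
  forall p q : 'I_3 -> {ffun 'I_n -> 'I_d},
    (forall i j, i != j -> coef v (p i) (q j) = 0) -> \prod_i coef v (p i) (q i) = 0.

Lemma coef_split n (v : vec n) (X : {ffun 'I_n -> idx d}) :
  coef v [ffun k => (X k).1] [ffun k => (X k).2] = v X.
Proof. by congr v; apply/ffunP => k; rewrite !ffunE; case: (X k). Qed.

Lemma coef_slice n (v : vec n.+1) a b p q :
  coef (slice v (a, b)) p q = coef v (fcons a p) (fcons b q).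
Proof.
rewrite /coef /slice; congr v; apply/ffunP => k; rewrite !ffunE.
by case: (unliftP ord0 k) => [j _|_]; rewrite ?ffunE.
Qed.

Lemma no_diag_minor3_slice n (v : vec n.+1) a b :
  no_diag_minor3 v -> no_diag_minor3 (slice v (a, b)).
Proof.
move=> Hv p q Hoff; under eq_bigr do rewrite coef_slice.
by apply: Hv => i j ij; rewrite -coef_slice Hoff.
Qed.

Lemma schmidt_rank_lt3_no_diag_minor n (v : vec n) :
  (schmidt_rank v < 3)%N -> no_diag_minor3 v.
Proof.
move=> Hr p q Hoff; apply/eqP; apply: contraLR Hr; rewrite -leqNgt => Hprod.
pose S := mxsub (enum_rank \o p) (enum_rank \o q) (coefmx v).
have S_diag : S = diag_mx (\row_i coef v (p i) (q i)).
  apply/matrixP => i j; rewrite !mxE /= !enum_rankK.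
  by case: eqVneq => [->|/Hoff]; rewrite ?mulr1n ?mulr0n.
have rankS : \rank S = 3.
  rewrite S_diag mxrank_unit // unitmxE det_diag unitfE.
  by under eq_bigr do rewrite mxE.
by have := mxrank_mxsub (enum_rank \o p) (enum_rank \o q) (coefmx v); rewrite -/S rankS.
Qed.

Lemma exists_diag_slice_eq0 n (v : vec n.+1) : (3 <= d)%N -> no_diag_minor3 v ->
    (forall a b, a != b -> forall Y, slice v (a, b) Y = 0) ->
  exists a, forall Y, slice v (a, a) Y = 0.
Proof.
move=> d3 Hv Hoff.
case: (pickP (fun a => [forall Y, slice v (a, a) Y == 0])) => [a /forallP Ha | none].
  by exists a => Y; apply/eqP.
have /fin_all_exists [Y HY] a : exists Y, slice v (a, a) Y != 0.
  by have /negbT/forallPn [Y] := none a; exists Y.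
pose e := widen_ord d3.
have prod_eq0 : \prod_i slice v (e i, e i) (Y (e i)) = 0.
  under eq_bigr do rewrite -coef_split coef_slice.
  apply: Hv => i j ij; rewrite -coef_slice; apply: Hoff.
  by apply: contra ij => /eqP [/val_inj ->].
by move/eqP: prod_eq0; case/prodf_neq0 => i _; apply: HY.
Qed.

End Coefficients.

Section TensorPower.
Variables (R : realType) (d : nat) (A : idx d -> idx d -> R[i]).
Local Notation vec n := ({ffun 'I_n -> idx d} -> R[i]).

Lemma tpow_fcons n x y (X Y : {ffun 'I_n -> idx d}) :
  tpow A (fcons x X) (fcons y Y) = A x y * tpow A X Y.
Proof.
rewrite /tpow big_ord_recl !fcons0; congr (_ * _).
by apply: eq_bigr => k _; rewrite !fconsS.
Qed.

Lemma tpow_mul_fcons n (v : vec n.+1) x X :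
  \sum_Y tpow A (fcons x X) Y * v Y = \sum_y A x y * \sum_Y tpow A X Y * slice v y Y.
Proof.
rewrite big_fcons; apply: eq_bigr => y _; rewrite mulr_sumr.
by apply: eq_bigr => Y _; rewrite tpow_fcons mulrA.
Qed.

Hypothesis d3 : (3 <= d)%N.
Hypothesis kerA : forall w : idx d -> R[i], (forall x, \sum_y A x y * w y = 0) ->
  exists z, forall x, w x = z * (x.1 == x.2)%:R.

Lemma in_null_tpow_eq0 n (v : vec n) :
  in_null (tpow A) v -> no_diag_minor3 v -> forall X, v X = 0.
Proof.
elim: n v => [|n IH] v Hnull Hv X.
  have := Hnull X; rewrite (big_pred1 X) => [|Y]; first by rewrite /tpow big_ord0 mul1r.
  by symmetry; apply/eqP/ffunP => -[].
pose u X' y := \sum_Y tpow A X' Y * slice v y Y.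
have /fin_all_exists [z Hz] X' : exists z, forall y, u X' y = z * (y.1 == y.2)%:R.
  by apply: kerA => x; rewrite -tpow_mul_fcons.
have slice_eq0 y : (forall X', u X' y = 0) -> forall Y, slice v y Y = 0.
  by move=> Hy; apply: IH => //; case: y {Hy} => a b; apply: no_diag_minor3_slice.
have off a b : a != b -> forall Y, slice v (a, b) Y = 0.
  by move=> ab; apply: slice_eq0 => X'; rewrite Hz /= (negbTE ab) mulr0.
have [a0 Ha0] := exists_diag_slice_eq0 d3 Hv off.
have diag b Y : slice v (b, b) Y = 0.
  apply: slice_eq0 => X'; have -> : u X' (b, b) = u X' (a0, a0) by rewrite !Hz /= !eqxx.
  by rewrite /u big1 // => Y' _; rewrite Ha0 mulr0.
rewrite -(fcons_ftail X); case: (X ord0) => a b.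
by case: (eqVneq a b) => [<-|]; [apply: diag | move/off; apply].
Qed.

End TensorPower.

Lemma sum_delta (I : finType) (V : pzSemiRingType) (x : I) (F : I -> V) :
  \sum_y (y == x)%:R * F y = F x.
Proof.
rewrite (bigD1 x) //= eqxx mul1r big1 ?addr0 // => y /negbTE ->.
by rewrite mul0r.
Qed.

Lemma sum_pair (I J : finType) (V : nmodType) (F : I * J -> V) :
  \sum_y F y = \sum_i \sum_j F (i, j).
Proof. by rewrite pair_bigA; apply: eq_bigr => -[]. Qed.

Section Rho.
Variables (R : realType) (d : nat).
Local Notation C := R[i].
Local Notation "x %:C" := (real_complex R x).

Definition rho_diag_coef (c : R) : R := 1 / (2 * d%:R) - (d%:R - 1) / 2 * c.
Definition rho_singlet_coef : R := 1 / (d%:R * (d%:R - 1)).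

Lemma sum_ket (F : 'I_d -> 'I_d -> C) (x : idx d) :
  \sum_i \sum_j ket R i j x * F i j = F x.1 x.2.
Proof.
rewrite pair_bigA /= /ket (bigD1 x) //= -surjective_pairing eqxx mul1r big1 ?addr0 //.
by move=> p; rewrite -surjective_pairing eq_sym => /negbTE ->; rewrite mul0r.
Qed.

Lemma sum_ket_swap (F : 'I_d -> 'I_d -> C) (x : idx d) :
  \sum_i \sum_j ket R j i x * F i j = F x.2 x.1.
Proof. by rewrite exchange_big sum_ket. Qed.

Lemma sum_ket_diag (p q : idx d) :
  \sum_i ket R i i p * ket R i i q = ((p.1 == p.2) && (q == p))%:R.
Proof.
case: p => a b; rewrite /ket (bigD1 a) //= big1 ?addr0 => [|i ia]; last first.
  by rewrite xpair_eqE eq_sym (negbTE ia) mul0r.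
by rewrite xpair_eqE eqxx /= [b == a]eq_sym; case: eqVneq => [->|]; rewrite ?mul1r ?mul0r.
Qed.

Lemma proj_psi (s : C) (i j : 'I_d) (p q : idx d) : s^* = s ->
  proj (psi s i j) p q =
  2^-1 * ((ket R i j p + s * ket R j i p) * (ket R i j q + s * ket R j i q)).
Proof.
move=> sR; rewrite /proj /psi rmorphM /= fmorphV rmorphD rmorphM /= sR /ket !conjC_nat.
by rewrite geC0_conj ?sqrtC_ge0 ?ler0n // mulrACA -invfM -expr2 sqrtCK.
Qed.

Lemma sum_proj_psi (s : C) (p q : idx d) : s^* = s -> s ^+ 2 = 1 ->
  \sum_(i : 'I_d) \sum_(j : 'I_d | (i < j)%N) proj (psi s i j) p q =
  2^-1 * ((p.1 != p.2)%:R * ((q == p)%:R + s * (q == (p.2, p.1))%:R)).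
Proof.
move=> sR s2; case: p => a b /=.
pose g i j := (ket R i j (a, b) + s * ket R j i (a, b)) * (ket R i j q + s * ket R j i q).
have flip u v : u + s * v = s * (v + s * u).
  by rewrite mulrDr mulrA -expr2 s2 mul1r addrC.
have gC i j : g i j = g j i.
  by rewrite /g [in RHS]flip [in RHS](flip (ket R j i q)) mulrACA -expr2 s2 mul1r.
have full : \sum_i \sum_j g i j = ((q == (a, b))%:R + s * (q == (b, a))%:R) *+ 2.
  under eq_bigr do under eq_bigr do rewrite /g mulrDl -mulrA.
  under eq_bigr do rewrite big_split -mulr_sumr.
  rewrite big_split -mulr_sumr /= sum_ket sum_ket_swap /= /ket.
  by rewrite mulrDr mulrA -expr2 s2 mul1r [X in _ + X]addrC mulr2n.
have diag : \sum_i g i i = (1 + s) ^+ 2 * ((a == b) && (q == (a, b)))%:R.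
  by rewrite -(sum_ket_diag (a, b)) mulr_sumr; apply: eq_bigr => i _; rewrite /g; ring.
set T := (a != b)%:R * _.
have split_full : \sum_i \sum_j g i j = \sum_i g i i + T *+ 2.
  rewrite full diag /T; case: (eqVneq a b) => [<-|_] /=; last by rewrite mulr0 mul1r add0r.
  by rewrite mul0r mul0rn addr0 sqrrD s2 expr1n mul1r; ring.
under eq_bigr do under eq_bigr do rewrite proj_psi //.
under eq_bigr do rewrite -mulr_sumr.
rewrite -mulr_sumr; congr (_ * _); apply/eqP; rewrite -subr_eq0.
have := sumr_sym_triangle gC; rewrite split_full => /addrI /eqP.
by rewrite eq_sym -subr_eq0 -mulrnBl mulrn_eq0 /=; apply.
Qed.

Lemma rhoE c (p q : idx d) : rho c p q =
    ((rho_diag_coef c)%:C * (p.1 == p.2)%:R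
     + (rho_singlet_coef%:C + c%:C) / 2 * (p.1 != p.2)%:R) * (q == p)%:R
  + (c%:C - rho_singlet_coef%:C) / 2 * (p.1 != p.2)%:R * (q == (p.2, p.1))%:R.
Proof.
have singletE : 1 / (d%:R * (d%:R - 1)) = rho_singlet_coef%:C :> C.
  by rewrite fmorph_div rmorph1 rmorphM rmorphB rmorph_nat.
rewrite /rho -/(rho_diag_coef c) singletE.
under eq_bigr do rewrite /proj conjC_nat.
rewrite sum_ket_diag !sum_proj_psi ?rmorphN1 ?rmorph1 ?sqrrN ?expr1n //.
by case: (p.1 == p.2); rewrite /=; ring.
Qed.

Lemma pt_rhoE c (x y : idx d) : pt (rho c) x y =
    (if x.1 == x.2 then (rho_diag_coef c)%:C else (rho_singlet_coef%:C + c%:C) / 2)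
      * (y == x)%:R
  + (c%:C - rho_singlet_coef%:C) / 2 * ((x.1 == x.2) && (y.1 != x.1) && (y.1 == y.2))%:R.
Proof.
case: x y => [a b] [k l]; rewrite /pt rhoE /= !xpair_eqE [b == l]eq_sym [b == a]eq_sym.
rewrite -[_ * (a != l)%:R * _]mulrA -natrM mulnb; congr (_ + _ * _%:R).
  case: (eqVneq l b) => [->|]; last by rewrite !andbF !mulr0.
  by case: (a == b); rewrite /=; ring.
by case: (eqVneq k l) => [<-|]; rewrite ?andbF //= andbT andbC [k == a]eq_sym.
Qed.

Lemma pt_rho_mul c (w : idx d -> C) x : \sum_y pt (rho c) x y * w y =
  if x.1 == x.2 then
    ((rho_diag_coef c)%:C - (c%:C - rho_singlet_coef%:C) / 2) * w x
      + (c%:C - rho_singlet_coef%:C) / 2 * \sum_k w (k, k)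
  else (rho_singlet_coef%:C + c%:C) / 2 * w x.
Proof.
under eq_bigr do rewrite pt_rhoE mulrDl -![_ * _%:R * _]mulrA.
rewrite big_split /= -!mulr_sumr sum_delta.
case: x => a b /=; case: (eqVneq a b) => [<-|ab] /=; last first.
  by rewrite big1 ?mulr0 ?addr0 // => y _; rewrite mul0r.
have off_diag :
    \sum_y ((y.1 != a) && (y.1 == y.2))%:R * w y = \sum_k w (k, k) - w (a, a).
  rewrite sum_pair [X in _ = X - _](bigD1 a) //= addrC addrK (bigD1 a) //= eqxx.
  rewrite big1 ?add0r => [|l _]; last by rewrite mul0r.
  apply: eq_bigr => k ka; rewrite ka.
  by under eq_bigr do rewrite [_ == _]eq_sym; rewrite sum_delta.
by rewrite off_diag; ring.
Qed.

Lemma rho_singlet_coef_gt0 : (2 <= d)%N -> 0 < rho_singlet_coef.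
Proof.
move=> d2; have d2R : (2 : R) <= d%:R by rewrite ler_nat.
by rewrite divr_gt0 // mulr_gt0; lra.
Qed.

Lemma rho_diag_coef_gap c : (2 <= d)%N ->
  rho_diag_coef c - (c - rho_singlet_coef) / 2 = d%:R / 2 * (rho_singlet_coef - c).
Proof.
move=> d2; have d2R : (2 : R) <= d%:R by rewrite ler_nat.
rewrite /rho_diag_coef /rho_singlet_coef; field.
by apply/andP; split; apply/eqP; lra.
Qed.

Lemma ker_pt_rho c (w : idx d -> C) : (2 <= d)%N -> 0 <= c -> c < rho_singlet_coef ->
    (forall x, \sum_y pt (rho c) x y * w y = 0) ->
  exists z, forall x, w x = z * (x.1 == x.2)%:R.
Proof.
move=> d2 c0 c_lt Hw; have b0 := rho_singlet_coef_gt0 d2.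
set B := (c%:C - rho_singlet_coef%:C) / 2.
set G := (rho_diag_coef c)%:C - B.
have G_neq0 : G != 0.
  rewrite /G /B -rmorphB -(rmorph_nat (real_complex R) 2) -fmorph_div -rmorphB.
  rewrite rho_diag_coef_gap // fmorph_eq0 lt0r_neq0 //.
  by rewrite mulr_gt0 ?divr_gt0 ?subr_gt0 ?ltr0n ?(ltnW d2).
have S_neq0 : (rho_singlet_coef%:C + c%:C) / 2 != 0.
  rewrite -rmorphD -(rmorph_nat (real_complex R) 2) -fmorph_div fmorph_eq0.
  by rewrite lt0r_neq0 // divr_gt0 // ltr_wpDr.
exists (- B / G * \sum_k w (k, k)) => -[a b].
have := Hw (a, b); rewrite pt_rho_mul /=; case: (eqVneq a b) => [<-|_] /=.
  move/eqP; rewrite addr_eq0 => /eqP E.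
  by rewrite -[w _](mulKf G_neq0) E mulr1 /B; ring.
by move/eqP; rewrite mulf_eq0 (negbTE S_neq0) /= => /eqP ->; rewrite mulr0.
Qed.

End Rho.

Theorem theorem3 (R : realType) (d n : nat) (c : R) :
  (3 <= d)%N -> (1 <= n)%N ->
  0 <= c -> c < 1 / (d%:R * (d%:R - 1)) ->
  forall v : {ffun 'I_n -> idx d} -> R[i],
    (exists X, v X != 0) ->
    @in_null R d n (@tpow R d n (@pt R d (@rho R d c))) v ->
    (3 <= @schmidt_rank R d n v)%N.
Proof.
move=> d3 _ c0 c_lt v [X vX] Hnull.
rewrite leqNgt; apply: contra vX => /schmidt_rank_lt3_no_diag_minor Hv.
have ker w := @ker_pt_rho R d c w (ltnW d3) c0 c_lt.
by apply/eqP; apply: (in_null_tpow_eq0 d3 ker Hnull Hv).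
Qed.
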